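(* The numbers $P_{1^{-1}2^{1}3^{-1}4^{-1}6^{3}12^{-1}}(n)$, defined by $\sum_{n\ge0}P_{1^{-1}2^{1}3^{-1}4^{-1}6^{3}12^{-1}}(n)q^n=\frac{f_2f_6^3}{f_1f_3f_4f_{12}}$, form a $3$-convolutive sequence.
   Context: $f_i:=(q^i;q^i)_\infty=\prod_{k\ge1}(1-q^{ik})$. A sequence $(a_n)_{n\ge0}$ is $m$-convolutive if $\sum_{n\ge0}a_{mn}q^n=\big(\sum_{n\ge0}a_nq^n\big)^m$. *)

From mathcomp Require Import all_boot all_algebra.
Set Implicit Arguments. Unset Strict Implicit. Unset Printing Implicit Defensive.
Import GRing.Theory.
Local Open Scope ring_scope.

Definition series := nat -> int.

Definition smul (a b : series) : series :=
  fun n => \sum_(i < n.+1) a i * b (n - i)%N.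

Definition sone : series := fun n => (n == 0%N)%:R.

Definition one_minus_qk (k : nat) : series :=
  fun n => if n == 0%N then 1 else if n == k then -1 else 0.

(* 1/(1 - q^k) = sum_j q^(k j)  (for k >= 1) *)
Definition inv_one_minus_qk (k : nat) : series :=
  fun n => if (k %| n)%N then 1 else 0.

(* Partial products: prod_{k=1}^{M} (1 - q^{ik}) = f_i truncated, and its inverse. *)
Definition f_part (i M : nat) : series :=
  foldr smul sone [seq one_minus_qk (i * k) | k <- iota 1 M].
Definition finv_part (i M : nat) : series :=
  foldr smul sone [seq inv_one_minus_qk (i * k) | k <- iota 1 M].

Definition gen_part (M : nat) : series :=
  smul (f_part 2 M) (smul (f_part 6 M) (smul (f_part 6 M) (smul (f_part 6 M)
    (smul (finv_part 1 M) (smul (finv_part 3 M) (smul (finv_part 4 M) (finv_part 12 M))))))).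

(* Coefficients of the infinite product: the n-th coefficient of the q-adic limit
   equals that of the partial product with factors k = 1..n (factors with k > n are
   1 + O(q^{n+1})). *)
Definition P (n : nat) : int := gen_part n n.

Definition spow (a : series) (m : nat) : series := iter m (smul a) sone.
Definition convolutive (m : nat) (a : series) : Prop :=
  forall n, a (m * n)%N = spow a m n.

(* The substitution q -> -q turns f2 f6^3 / (f1 f3 f4 f12) into
   G = f1 f3 / f2^2, and since (-1)^(3n) = (-1)^n it suffices to show that the part of G
   on exponents divisible by 3 is G(q^3)^3.  By the Jacobi triple product,
   psi = sum_{n in Z} q^(2n^2 + n) = f2^2 / f1, so G = f3 / psi.  No exponent 2n^2 + n is
   2 mod 3, so psi = a0 + a1 by residues, with a0(q) = theta(q^3) for the pentagonal theta
   series theta = sum_n q^(n(3n-1)/2) = f2 f3^2 / (f1 f6), and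
   1 / psi = (a0^2 - a0 a1 + a1^2) / (a0^3 + a1^3), whose denominator is the norm
   psi(q) psi(wq) psi(w^2 q) (w a primitive cube root of unity) and involves only powers
   of q^3.  The 0 mod 3 part of G is therefore f3 a0^2 / norm(psi); the norm is computed
   from norm(f_k) f_(9k) = f_(3k)^4 (3 not dividing k), and the result is
   f3^3 f9^3 / f6^6 = G(q^3)^3. *)

From HB Require Import structures.
From mathcomp Require Import all_boot all_algebra.
From mathcomp Require Import boolp ring zify.

Set Implicit Arguments. Unset Strict Implicit. Unset Printing Implicit Defensive.
Import GRing.Theory.
Local Open Scope ring_scope.

HB.instance Definition _ := gen_eqMixin series.
HB.instance Definition _ := gen_choiceMixin series.

Definition sadd (a b : series) : series := fun n => a n + b n.
Definition sopp (a : series) : series := fun n => - a n.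
Definition szero : series := fun=> 0.

Lemma saddA : associative sadd.
Proof. by move=> a b c; apply: funext => n; rewrite /sadd addrA. Qed.
Lemma saddC : commutative sadd.
Proof. by move=> a b; apply: funext => n; rewrite /sadd addrC. Qed.
Lemma sadd0 : left_id szero sadd.
Proof. by move=> a; apply: funext => n; rewrite /sadd add0r. Qed.
Lemma saddN : left_inverse szero sopp sadd.
Proof. by move=> a; apply: funext => n; rewrite /sadd /sopp addNr. Qed.

HB.instance Definition _ := GRing.isZmodule.Build series saddA saddC sadd0 saddN.

Lemma saddE (a b : series) n : (a + b) n = a n + b n. Proof. by []. Qed.
Lemma soppE (a : series) n : (- a) n = - a n. Proof. by []. Qed.
Lemma ssubE (a b : series) n : (a - b) n = a n - b n. Proof. by []. Qed.
Lemma szeroE n : (0 : series) n = 0. Proof. by []. Qed.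

Definition strunc (n : nat) (a : series) : {poly int} := \poly_(i < n.+1) a i.

Lemma coef_strunc n a i : (i <= n)%N -> (strunc n a)`_i = a i.
Proof. by move=> le_in; rewrite coef_poly ltnS le_in. Qed.

Lemma smul_coef_poly (a b : series) (p r : {poly int}) n :
  (forall i, (i <= n)%N -> p`_i = a i) -> (forall i, (i <= n)%N -> r`_i = b i) ->
  smul a b n = (p * r)`_n.
Proof.
move=> pa rb; rewrite coefM; apply: eq_bigr => i _.
by rewrite pa ?rb ?leq_subr // -ltnS.
Qed.

Lemma smul_strunc a b n : smul a b n = (strunc n a * strunc n b)`_n.
Proof. exact: smul_coef_poly (coef_strunc a) (coef_strunc b). Qed.

Lemma smul_strunc_le a b n i : (i <= n)%N -> smul a b i = (strunc n a * strunc n b)`_i.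
Proof.
by move=> le_in; apply: smul_coef_poly => j le_ji; apply: coef_strunc; apply: leq_trans le_in.
Qed.

Lemma smulA : associative smul.
Proof.
move=> a b c; apply: funext => n.
rewrite (@smul_coef_poly _ _ (strunc n a) (strunc n b * strunc n c)).
- rewrite (@smul_coef_poly _ _ (strunc n a * strunc n b) (strunc n c)) ?mulrA //.
    by move=> i le_in; rewrite (smul_strunc_le _ _ le_in).
  exact: coef_strunc.
- exact: coef_strunc.
- by move=> i le_in; rewrite (smul_strunc_le _ _ le_in).
Qed.

Lemma smulC : commutative smul.
Proof. by move=> a b; apply: funext => n; rewrite !smul_strunc mulrC. Qed.

Lemma smul1 : left_id sone smul.
Proof.
move=> a; apply: funext => n; rewrite (@smul_coef_poly _ _ 1 (strunc n a)).
- by rewrite mul1r coef_strunc.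
- by move=> i _; rewrite coef1.
- exact: coef_strunc.
Qed.

Lemma smulDl : left_distributive smul sadd.
Proof.
move=> a b c; apply: funext => n; rewrite /smul /sadd -big_split /=.
by apply: eq_bigr => i _; rewrite mulrDl.
Qed.

Lemma sone_neq0 : sone != szero.
Proof. by apply/eqP => /(congr1 (fun f => f 0%N)) /eqP; rewrite oner_eq0. Qed.

HB.instance Definition _ :=
  GRing.Zmodule_isComNzRing.Build series smulA smulC smul1 smulDl sone_neq0.

Lemma smulE (a b : series) n : (a * b) n = \sum_(i < n.+1) a i * b (n - i)%N.
Proof. by []. Qed.
Lemma soneE n : (1 : series) n = (n == 0%N)%:R. Proof. by []. Qed.

Lemma smul_mulr (a b : series) : smul a b = a * b. Proof. by []. Qed.

Lemma spowE a m : spow a m = a ^+ m.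
Proof. by elim: m => [|m IH]; rewrite ?expr0 // exprS -IH. Qed.

Lemma ssumE (I : Type) (r : seq I) (P : pred I) (F : I -> series) n :
  (\sum_(i <- r | P i) F i) n = \sum_(i <- r | P i) F i n.
Proof. exact: (big_morph (fun x : series => x n) (fun x y => saddE x y n) (szeroE n)). Qed.

Lemma smul0E (a b : series) : (a * b) 0%N = a 0%N * b 0%N.
Proof. by rewrite smulE big_ord1. Qed.

Definition eqmodq (N : nat) (x y : series) := forall i, (i < N)%N -> x i = y i.

Lemma eqmodq_refl N x : eqmodq N x x. Proof. by []. Qed.
Lemma eqmodq_sym N x y : eqmodq N x y -> eqmodq N y x.
Proof. by move=> xy i lt_iN; rewrite xy. Qed.
Lemma eqmodq_trans N x y z : eqmodq N x y -> eqmodq N y z -> eqmodq N x z.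
Proof. by move=> xy yz i lt_iN; rewrite xy ?yz. Qed.
Lemma eqmodq_le M N x y : (M <= N)%N -> eqmodq N x y -> eqmodq M x y.
Proof. by move=> le_MN xy i lt_iM; rewrite xy // (leq_trans lt_iM le_MN). Qed.
Lemma eqmodqD N x y x' y' : eqmodq N x y -> eqmodq N x' y' -> eqmodq N (x + x') (y + y').
Proof. by move=> xy xy' i lt_iN; rewrite !saddE xy ?xy'. Qed.
Lemma eqmodqB N x y x' y' : eqmodq N x y -> eqmodq N x' y' -> eqmodq N (x - x') (y - y').
Proof. by move=> xy xy' i lt_iN; rewrite !ssubE xy ?xy'. Qed.
Lemma eqmodqM N x y x' y' : eqmodq N x y -> eqmodq N x' y' -> eqmodq N (x * x') (y * y').
Proof.
move=> xy xy' i lt_iN; rewrite !smulE; apply: eq_bigr => j _.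
have lt_jN : (j < N)%N by apply: leq_ltn_trans lt_iN; rewrite -ltnS.
by rewrite xy // xy' // (leq_ltn_trans (leq_subr _ _) lt_iN).
Qed.
Lemma eqmodqX N x y k : eqmodq N x y -> eqmodq N (x ^+ k) (y ^+ k).
Proof.
move=> xy; elim: k => [|k IH]; first by rewrite !expr0.
by rewrite !exprS; apply: eqmodqM.
Qed.
Lemma eqmodq_sum_nat N m n (F G : nat -> series) :
  (forall i, (m <= i < n)%N -> eqmodq N (F i) (G i)) ->
  eqmodq N (\sum_(m <= i < n) F i) (\sum_(m <= i < n) G i).
Proof.
move=> FG; rewrite big_nat_cond [X in eqmodq _ _ X]big_nat_cond.
apply: big_ind2 => [|x1 x2 y1 y2|i /andP [mi _]]; [exact: eqmodq_refl | exact: eqmodqD | ].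
exact: FG.
Qed.

Lemma eq_series_eqmodq x y : (forall N, eqmodq N x y) -> x = y.
Proof. by move=> xy; apply: funext => n; apply: (xy n.+1). Qed.

Lemma eqmodq_lregl (u : series) N x y :
  u 0%N = 1 -> eqmodq N (u * x) (u * y) -> eqmodq N x y.
Proof.
move=> u0 uxy i; elim/ltn_ind: i => i IH lt_iN.
have := uxy i lt_iN; rewrite !smulE !big_ord_recl !subn0 u0 !mul1r.
rewrite (eq_bigr (fun j : 'I_i => u (lift ord0 j) * y (i - lift ord0 j)%N)) => [/addIr //|j _].
have lt_ji : (i - lift ord0 j < i)%N by rewrite lift0; have := ltn_ord j; lia.
by rewrite IH // (ltn_trans lt_ji lt_iN).
Qed.

Lemma lreg_series (u : series) : u 0%N = 1 -> GRing.lreg u.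
Proof.
move=> u0 x y uxy; apply: eq_series_eqmodq => N.
by apply: (eqmodq_lregl u0); rewrite uxy; apply: eqmodq_refl.
Qed.

Definition qcontinuous (T : series -> series) :=
  forall N x y, eqmodq N x y -> eqmodq N (T x) (T y).

Definition qpow (m : nat) : series := fun n => (n == m)%:R.

Lemma qpowE m n : qpow m n = (n == m)%:R. Proof. by []. Qed.
Lemma qpow0 : qpow 0 = 1. Proof. by []. Qed.

Lemma coef_qpowM m (x : series) n :
  (qpow m * x) n = if (m <= n)%N then x (n - m)%N else 0.
Proof.
rewrite smulE; case: leqP => [le_mn|lt_nm].
  rewrite (bigD1 (Ordinal (leq_ltn_trans le_mn (ltnSn n)))) //= qpowE eqxx mul1r.
  rewrite big1 ?addr0 // => j /eqP neq_jm; rewrite qpowE.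
  by case: eqP => [eq_jm|]; [case: neq_jm; apply: val_inj | rewrite mul0r].
rewrite big1 // => j _; rewrite qpowE; case: eqP => [eq_jm|]; last by rewrite mul0r.
by move: (ltn_ord j); rewrite eq_jm ltnS leqNgt lt_nm.
Qed.

Lemma qpowD a b : qpow a * qpow b = qpow (a + b).
Proof.
apply: funext => n; rewrite coef_qpowM !qpowE; case: leqP => [le_an|lt_na].
  by rewrite -(eqn_add2l a) subnKC.
by case: eqP => // eq_n; move: lt_na; rewrite eq_n ltnNge leq_addr.
Qed.

Lemma qpowX a k : qpow a ^+ k = qpow (a * k).
Proof.
elim: k => [|k IH]; first by rewrite expr0 muln0.
by rewrite exprS IH qpowD mulnS.
Qed.

Lemma qpow_lreg a : GRing.lreg (qpow a).
Proof.
move=> x y /(congr1 (fun f : series => f (a + _)%N)) axy; apply: funext => n.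
by have := axy n; rewrite !coef_qpowM leq_addr addKn.
Qed.

Lemma eqmodq_qpowM a N x y :
  eqmodq N x y -> eqmodq (a + N) (qpow a * x) (qpow a * y).
Proof.
move=> xy i lt_i; rewrite !coef_qpowM; case: leqP => // le_ai.
by apply: xy; rewrite ltn_subLR.
Qed.

(** * Infinite products *)

Definition prodq (c : nat -> series) (M : nat) : series := \prod_(1 <= k < M.+1) c k.

Definition admissible (c : nat -> series) := forall k, eqmodq k (c k) 1.

(* For admissible [c], the factors [c k] with [k > n] do not affect the
   coefficient of [q^n], so this is the q-adic limit of [prodq c]. *)
Definition iprod (c : nat -> series) : series := fun n => prodq c n n.

Lemma prodq0 c : prodq c 0 = 1. Proof. by rewrite /prodq big_geq. Qed.
Lemma prodqS c M : prodq c M.+1 = prodq c M * c M.+1.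
Proof. by rewrite /prodq big_nat_recr. Qed.

Lemma prodq_eqmodq c n M :
  admissible c -> (n <= M)%N -> eqmodq n.+1 (prodq c M) (prodq c n).
Proof.
move=> c1; elim: M => [|M IH] le_nM; first by move: le_nM; rewrite leqn0 => /eqP ->.
have [lt_nM | le_Mn] := ltnP n M.+1; last first.
  by have -> : n = M.+1 by apply/eqP; rewrite eqn_leq le_nM.
rewrite prodqS -[prodq c n]mulr1; apply: eqmodqM; first exact: IH.
exact: eqmodq_le (c1 M.+1).
Qed.

Lemma iprod_eqmodq c n M :
  admissible c -> (n <= M)%N -> eqmodq n.+1 (iprod c) (prodq c M).
Proof.
move=> c1 le_nM i lt_in; apply/esym/(prodq_eqmodq c1) => //.
by apply: leq_trans le_nM; rewrite -ltnS.
Qed.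

Lemma eq_iprod c d : c =1 d -> iprod c = iprod d.
Proof. by move=> cd; apply: funext => n; rewrite /iprod /prodq (eq_bigr _ (fun k _ => cd k)). Qed.

Lemma iprod1 : iprod (fun=> 1) = 1.
Proof. by apply: funext => n; rewrite /iprod /prodq big1. Qed.

Lemma iprod0E c : iprod c 0%N = 1.
Proof. by rewrite /iprod prodq0. Qed.

Lemma admissibleX c e : admissible c -> admissible (fun k => c k ^+ e).
Proof. by move=> c1 k; rewrite -(expr1n _ e); apply: eqmodqX. Qed.

Lemma iprodM c d : admissible c -> admissible d ->
  iprod (fun k => c k * d k) = iprod c * iprod d.
Proof.
move=> c1 d1; apply: eq_series_eqmodq => N i _.
rewrite (eqmodqM (iprod_eqmodq c1 (leqnn i)) (iprod_eqmodq d1 (leqnn i)) (ltnSn i)).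
by rewrite /iprod /prodq big_split.
Qed.

Lemma iprod_split (P : pred nat) c : admissible c ->
  iprod c = iprod (fun j => if P j then c j else 1) * iprod (fun j => if P j then 1 else c j).
Proof.
move=> c1; rewrite -iprodM; first by apply: eq_iprod => j; case: (P j); rewrite ?mulr1 ?mul1r.
  by move=> j; case: (P j).
by move=> j; case: (P j).
Qed.

Lemma admissible_morph (T : series -> series) c :
  T 1 = 1 -> qcontinuous T -> admissible c -> admissible (fun k => T (c k)).
Proof. by move=> T1 Tcont c1 k; rewrite -T1; apply: Tcont. Qed.

Lemma iprod_morph (T : series -> series) c :
  monoid_morphism T -> qcontinuous T -> admissible c ->
  T (iprod c) = iprod (fun k => T (c k)).
Proof.
move=> [T1 TM] Tcont c1; apply: funext => n.
have := Tcont _ _ _ (iprod_eqmodq c1 (leqnn n)) n (ltnSn n) => ->.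
by rewrite /iprod /prodq (big_morph T TM T1).
Qed.

Lemma iprod_spread m d : (0 < m)%N -> (forall i, eqmodq (m * i) (d i) 1) ->
  iprod (fun j => if (m %| j)%N then d (j %/ m)%N else 1) = iprod d.
Proof.
move=> m_gt0 d1; set c := fun j => _.
have c1 : admissible c.
  move=> k; rewrite /c; case: ifP => // /divnK def_k.
  by rewrite -{1}def_k mulnC; apply: d1.
have d1' : admissible d by move=> k; apply: eqmodq_le (d1 k); rewrite leq_pmull.
have prodq_c n : prodq c (m * n) = prodq d n.
  elim: n => [|n IH]; first by rewrite muln0 !prodq0.
  rewrite prodqS -IH /prodq (@big_cat_nat _ _ _ (m * n).+1) //=; last by nia.
  congr (_ * _); rewrite big_nat_recr /=; last by nia.
  rewrite /c dvdn_mulr // mulKn // big_nat_cond big1 ?mul1r // => k.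
  case/andP=> /andP [lt_k k_lt] _; case: ifP => // /dvdnP [t def_k].
  move: lt_k k_lt; rewrite def_k [(t * m)%N]mulnC ltn_mul2l => /andP [_ lt_nt].
  by rewrite ltn_mul2l => /andP [_]; lia.
apply: funext => n; rewrite /iprod -prodq_c; apply/esym/(prodq_eqmodq c1) => //.
exact: leq_pmull.
Qed.

(** * The substitutions q -> -q and q -> q^m *)

Definition twist (x : series) : series := fun n => (-1) ^+ n * x n.

Lemma twist_is_zmod_morphism : zmod_morphism twist.
Proof. by move=> x y; apply: funext => n; rewrite /twist !ssubE mulrBr. Qed.

Lemma twist_is_monoid_morphism : monoid_morphism twist.
Proof.
split; first by apply: funext => -[|n]; rewrite /twist soneE ?mulr0.
move=> x y; apply: funext => n; rewrite /twist !smulE mulr_sumr.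
apply: eq_bigr => i _; have le_in : (i <= n)%N by rewrite -ltnS.
by rewrite -{1}(subnKC le_in) exprD; ring.
Qed.

HB.instance Definition _ :=
  GRing.isZmodMorphism.Build series series twist twist_is_zmod_morphism.
HB.instance Definition _ :=
  GRing.isMonoidMorphism.Build series series twist twist_is_monoid_morphism.

Lemma twistK : involutive twist.
Proof. by move=> x; apply: funext => n; rewrite /twist mulrA -exprMn mulrNN mulr1 expr1n mul1r. Qed.

Lemma twist_qcontinuous : qcontinuous twist.
Proof. by move=> N x y xy i lt_iN; rewrite /twist xy. Qed.

Lemma twist_qpow m : twist (qpow m) = if odd m then - qpow m else qpow m.
Proof.
apply: funext => n; rewrite /twist; case: (eqVneq n m) => [->|neq_nm].
  by rewrite -signr_odd; case: (odd m); rewrite ?soppE qpowE eqxx ?mulN1r ?mul1r.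
by case: (odd m); rewrite ?soppE !qpowE (negbTE neq_nm) mulr0 ?oppr0.
Qed.

Definition dilate (m : nat) (x : series) : series :=
  fun n => if (m %| n)%N then x (n %/ m)%N else 0.

Lemma dilate_is_zmod_morphism m : zmod_morphism (dilate m).
Proof.
by move=> x y; apply: funext => n; rewrite /dilate !ssubE; case: ifP; rewrite ?subr0.
Qed.

Lemma dilate_is_monoid_morphism m : monoid_morphism (dilate m).
Proof.
have [-> | m_gt0] := posnP m.
  split; first by apply: funext => -[|n]; rewrite /dilate dvd0n.
  move=> x y; apply: funext => -[|n]; first by rewrite smul0E /dilate dvdnn divn0 smul0E.
  rewrite smulE {1}/dilate dvd0n big1 // => i _; rewrite /dilate !dvd0n.
  by case: (nat_of_ord i) => [|j]; rewrite ?subn0 /= ?mulr0 ?mul0r.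
split.
  apply: funext => n; rewrite /dilate !soneE; case: ifP => [m_n|]; last by case: n; rewrite ?dvdn0.
  by rewrite -{2}(divnK m_n) muln_eq0 (negbTE (lt0n_neq0 m_gt0)) orbF.
have coef_dilate x n i : (i <= n)%N -> ((strunc n x) \Po 'X^m)`_i = dilate m x i.
  move=> le_in; rewrite coef_comp_poly_Xn // /dilate; case: ifP => // _.
  by rewrite coef_strunc // (leq_trans (leq_div _ _) le_in).
move=> x y; apply: funext => n.
rewrite [RHS](smul_coef_poly (coef_dilate x n) (coef_dilate y n)).
rewrite -comp_polyM coef_comp_poly_Xn // /dilate; case: ifP => // _.
by apply: smul_coef_poly => i le_in; rewrite coef_strunc // (leq_trans le_in (leq_div _ _)).
Qed.

HB.instance Definition _ m :=
  GRing.isZmodMorphism.Build series series (dilate m) (dilate_is_zmod_morphism m).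
HB.instance Definition _ m :=
  GRing.isMonoidMorphism.Build series series (dilate m) (dilate_is_monoid_morphism m).

Lemma dilate_qcontinuous m : qcontinuous (dilate m).
Proof.
move=> N x y xy i lt_iN; rewrite /dilate; case: ifP => // _.
by apply: xy; apply: leq_ltn_trans lt_iN; apply: leq_div.
Qed.

Lemma dilate_qpow m a : (0 < m)%N -> dilate m (qpow a) = qpow (m * a).
Proof.
move=> m_gt0; apply: funext => n; rewrite /dilate !qpowE; case: ifP => [m_n|].
  by rewrite -{2}(divnK m_n) mulnC eqn_pmul2l.
by case: eqP => // ->; rewrite dvdn_mulr.
Qed.

Lemma dilate_mulnE m x n : (0 < m)%N -> dilate m x (m * n)%N = x n.
Proof. by move=> m_gt0; rewrite /dilate dvdn_mulr // mulKn. Qed.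

(** * 3-dissection *)

Definition part3 (r : nat) (x : series) : series :=
  fun n => if (n %% 3 == r)%N then x n else 0.

Definition supp3 (r : nat) (x : series) := forall n, (n %% 3 != r)%N -> x n = 0.

Lemma part3_is_zmod_morphism r : zmod_morphism (part3 r).
Proof.
by move=> x y; apply: funext => n; rewrite /part3 !ssubE; case: ifP; rewrite ?subr0.
Qed.

HB.instance Definition _ r :=
  GRing.isZmodMorphism.Build series series (part3 r) (part3_is_zmod_morphism r).

Lemma part3_qcontinuous r : qcontinuous (part3 r).
Proof. by move=> N x y xy i lt_iN; rewrite /part3 xy. Qed.

Lemma part3_sum x : x = part3 0 x + part3 1 x + part3 2 x.
Proof.
apply: funext => n; rewrite !saddE /part3.
have : (n %% 3 < 3)%N by rewrite ltn_mod.
by case: (n %% 3)%N => [|[|[|k]]] //= _; rewrite ?addr0 ?add0r.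
Qed.

Lemma supp3_part3 r x : supp3 r (part3 r x).
Proof. by move=> n /negbTE nr; rewrite /part3 nr. Qed.

Lemma part3_id r x : supp3 r x -> part3 r x = x.
Proof. by move=> xr; apply: funext => n; rewrite /part3; case: eqP => // /eqP /xr. Qed.

Lemma part3_eq0 r s x : supp3 s x -> r != s -> part3 r x = 0.
Proof.
move=> xs neq_rs; apply: funext => n; rewrite /part3 szeroE.
by case: eqP => // nr; rewrite xs // nr.
Qed.

Lemma supp3M r s x y : supp3 r x -> supp3 s y -> supp3 ((r + s) %% 3) (x * y).
Proof.
move=> xr ys n nrs; rewrite smulE big1 // => i _.
have le_in : (i <= n)%N by rewrite -ltnS.
have [ir | /xr -> ] := eqVneq (i %% 3)%N r; last by rewrite mul0r.
have [nis | /ys -> ] := eqVneq ((n - i) %% 3)%N s; last by rewrite mulr0.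
by move: nrs; rewrite -ir -nis modnDm subnKC // eqxx.
Qed.

Lemma part3_supp3M r i j x y : supp3 i x -> supp3 j y ->
  part3 r (x * y) = if ((i + j) %% 3 == r)%N then x * y else 0.
Proof.
move=> xi yj; have xyij := supp3M xi yj; case: eqP => [<- | neq_r].
  exact: part3_id.
by apply: part3_eq0 xyij _; apply/eqP => eq_r; apply: neq_r.
Qed.

Lemma supp3_qpow a : supp3 (a %% 3) (qpow a).
Proof. by move=> n /negP na; rewrite qpowE; case: eqP => // eq_na; case: na; rewrite eq_na. Qed.

Lemma supp3_1 : supp3 0 1.
Proof. by case. Qed.

Lemma part3_1 r : part3 r 1 = (r == 0)%N%:R.
Proof. by case: r => [|r]; [rewrite part3_id //; apply: supp3_1 | rewrite (part3_eq0 supp3_1)]. Qed.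

Lemma part3_qpow r m : part3 r (qpow m) = if (m %% 3 == r)%N then qpow m else 0.
Proof.
case: eqP => [<- | neq_r]; first exact/part3_id/supp3_qpow.
by apply: part3_eq0 (@supp3_qpow m) _; apply/eqP => eq_r; apply: neq_r.
Qed.

Lemma supp3D r x y : supp3 r x -> supp3 r y -> supp3 r (x + y).
Proof. by move=> xr yr n nr; rewrite saddE xr ?yr ?addr0. Qed.

Lemma supp3B r x y : supp3 r x -> supp3 r y -> supp3 r (x - y).
Proof. by move=> xr yr n nr; rewrite ssubE xr ?yr ?subr0. Qed.

Lemma supp3_natr k : supp3 0 (k%:R : series).
Proof. by elim: k => [|k IH]; [move=> n | rewrite mulrS; apply: supp3D supp3_1 IH]. Qed.

Lemma supp3X r x k : supp3 r x -> supp3 ((r * k) %% 3) (x ^+ k).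
Proof.
move=> xr; elim: k => [|k IH]; first by rewrite muln0 expr0; apply: supp3_1.
by rewrite exprS mulnS -modnDmr; apply: supp3M.
Qed.

Lemma supp3_dilate3 x : supp3 0 (dilate 3 x).
Proof. by move=> n n0; rewrite /dilate /dvdn (negbTE n0). Qed.

Lemma part3_supp0M r u v : supp3 0 u -> part3 r (u * v) = u * part3 r v.
Proof.
move=> u0; apply: funext => n; rewrite [RHS]smulE.
have term (i : 'I_n.+1) : u i * part3 r v (n - i)%N =
    if (n %% 3 == r)%N then u i * v (n - i)%N else 0.
  have [i0 | /u0 ->] := eqVneq (i %% 3)%N 0; last by rewrite !mul0r; case: ifP.
  have le_in : (i <= n)%N by rewrite -ltnS.
  have -> : (n %% 3 = (n - i) %% 3)%N.
    by rewrite -{1}(subnK le_in) -modnDm i0 addn0 modn_mod.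
  by rewrite /part3; case: ifP; rewrite ?mulr0.
rewrite (eq_bigr _ (fun i _ => term i)) /part3; case: ifP => _ //.
by rewrite big1.
Qed.

Section PartsOfProduct.

Variables x y : series.

Let a r := part3 r x.
Let b r := part3 r y.

Lemma mul_part3_sum : x * y =
  a 0 * b 0 + a 0 * b 1 + a 0 * b 2 + a 1 * b 0 + a 1 * b 1 + a 1 * b 2
  + a 2 * b 0 + a 2 * b 1 + a 2 * b 2.
Proof. by rewrite {1}(part3_sum x) {1}(part3_sum y) /a /b; ring. Qed.

Let part3_ab r i j : part3 r (a i * b j) = if ((i + j) %% 3 == r)%N then a i * b j else 0.
Proof. by apply: part3_supp3M; apply: supp3_part3. Qed.

Lemma part3M0 : part3 0 (x * y) = a 0 * b 0 + a 1 * b 2 + a 2 * b 1.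
Proof. by rewrite mul_part3_sum !raddfD /= !part3_ab /= !addr0 ?add0r. Qed.
Lemma part3M1 : part3 1 (x * y) = a 0 * b 1 + a 1 * b 0 + a 2 * b 2.
Proof. by rewrite mul_part3_sum !raddfD /= !part3_ab /= !addr0 ?add0r. Qed.
Lemma part3M2 : part3 2 (x * y) = a 0 * b 2 + a 1 * b 1 + a 2 * b 0.
Proof. by rewrite mul_part3_sum !raddfD /= !part3_ab /= !addr0 ?add0r. Qed.

End PartsOfProduct.

(* With [w] a primitive cube root of unity, [norm3 x = x(q) x(wq) x(w^2 q)]. *)
Definition norm3 (x : series) : series :=
  part3 0 x ^+ 3 + part3 1 x ^+ 3 + part3 2 x ^+ 3
  - 3%:R * (part3 0 x * part3 1 x * part3 2 x).

Lemma norm3_is_monoid_morphism : monoid_morphism norm3.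
Proof.
split; last by move=> x y; rewrite /norm3 part3M0 part3M1 part3M2; ring.
by rewrite /norm3 part3_id ?(part3_eq0 supp3_1) //; [ring | exact: supp3_1].
Qed.

Lemma norm3X x k : norm3 (x ^+ k) = norm3 x ^+ k.
Proof.
have [norm3_1 norm3M] := norm3_is_monoid_morphism.
by elim: k => [|k IH]; rewrite ?expr0 // !exprS norm3M IH.
Qed.

Lemma norm3_qcontinuous : qcontinuous norm3.
Proof.
move=> N x y xy; have p r := part3_qcontinuous r xy.
apply: eqmodqB; first by apply: eqmodqD; [apply: eqmodqD|]; apply: eqmodqX.
by apply: eqmodqM; [apply: eqmodq_refl | apply: eqmodqM; [apply: eqmodqM|]].
Qed.

Lemma supp3_norm3 x : supp3 0 (norm3 x).
Proof.
have p r : supp3 r (part3 r x) by apply: supp3_part3.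
have cube r : supp3 0 (part3 r x ^+ 3) by have := supp3X (k := 3) (p r); rewrite modnMl.
apply: supp3B; first by apply: supp3D; [apply: supp3D|]; apply: cube.
exact: supp3M (supp3_natr 3) (supp3M (supp3M (p 0) (p 1)) (p 2)).
Qed.

(* With [psi = a0 + a1] split by residues, [norm3 psi = a0^3 + a1^3 = psi (a0^2 - a0 a1 + a1^2)]. *)
Lemma part3_quotient x psi y : part3 2 psi = 0 -> supp3 0 y -> x * psi = y ->
  part3 0 x * norm3 psi = y * part3 0 psi ^+ 2.
Proof.
move=> psi2 y0 def_y; set a0 := part3 0 psi; set a1 := part3 1 psi.
have def_psi : psi = a0 + a1 by rewrite {1}(part3_sum psi) psi2 addr0.
have norm3_psi : norm3 psi = psi * (a0 ^+ 2 - a0 * a1 + a1 ^+ 2).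
  by rewrite /norm3 psi2 -/a0 -/a1 def_psi; ring.
have p0 : supp3 0 a0 := supp3_part3 psi; have p1 : supp3 1 a1 := supp3_part3 psi.
rewrite mulrC -(part3_supp0M _ _ (supp3_norm3 psi)) norm3_psi mulrAC [psi * x]mulrC def_y.
rewrite part3_supp0M // !raddfD raddfN /= !expr2.
by rewrite (part3_supp3M _ p0 p0) (part3_supp3M _ p0 p1) (part3_supp3M _ p1 p1) /= subr0 addr0.
Qed.

(** * Euler products *)

Definition fq (k : nat) : series := iprod (fun j => 1 - qpow (k * j)).
Definition fqinv (k : nat) : series := iprod (fun j => inv_one_minus_qk (k * j)).

Lemma eqmodq_1Bqpow N m : (N <= m)%N -> eqmodq N (1 - qpow m) 1.
Proof.
move=> le_Nm i lt_iN; rewrite ssubE qpowE; case: eqP => [eq_im|]; last by rewrite subr0.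
by move: lt_iN; rewrite eq_im ltnNge le_Nm.
Qed.

Lemma admissible_fq k : (0 < k)%N -> admissible (fun j => 1 - qpow (k * j)).
Proof. by move=> k_gt0 j; apply: eqmodq_1Bqpow; rewrite leq_pmull. Qed.

Lemma admissible_fqinv k : (0 < k)%N -> admissible (fun j => inv_one_minus_qk (k * j)).
Proof.
move=> k_gt0 j [|i] lt_ij; first by rewrite /inv_one_minus_qk dvdn0.
rewrite /inv_one_minus_qk soneE; case: ifP => // /dvdn_leq -/(_ isT) le_kj_i.
by move: lt_ij; rewrite ltnNge (leq_trans _ le_kj_i) // leq_pmull.
Qed.

Lemma foldr_smul (s : seq nat) (F : nat -> series) :
  foldr smul sone [seq F k | k <- s] = \prod_(k <- s) F k.
Proof. by elim: s => [|k s IH]; rewrite ?big_nil ?big_cons //= IH. Qed.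

Lemma f_part_prodq i M : (0 < i)%N -> f_part i M = prodq (fun k => 1 - qpow (i * k)) M.
Proof.
move=> i_gt0; rewrite /f_part foldr_smul /prodq /index_iota subn1 /=.
apply: eq_big_seq => k; rewrite mem_iota => /andP [k_gt0 _].
apply: funext => n; rewrite ssubE soneE qpowE /one_minus_qk.
have /lt0n_neq0 ik_neq0 : (0 < i * k)%N by rewrite muln_gt0 i_gt0.
by case: n => [|n] /=; [rewrite eq_sym (negbTE ik_neq0) subr0 | case: eqP; rewrite ?subr0 ?sub0r].
Qed.

Lemma finv_part_prodq i M : finv_part i M = prodq (fun k => inv_one_minus_qk (i * k)) M.
Proof. by rewrite /finv_part foldr_smul /prodq /index_iota subn1. Qed.

Lemma mul_1Bqpow_geometric m :
  (0 < m)%N -> (1 - qpow m) * inv_one_minus_qk m = 1.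
Proof.
move=> m_gt0; apply: funext => -[|n].
  by rewrite mulrBl mul1r ssubE coef_qpowM leqNgt m_gt0 subr0 /inv_one_minus_qk dvdn0.
rewrite mulrBl mul1r ssubE coef_qpowM soneE /inv_one_minus_qk; case: leqP => [le_mn|lt_nm].
  by rewrite (dvdn_subl le_mn (dvdnn m)) subrr.
by case: ifP => // /(dvdn_leq (ltn0Sn n)); rewrite leqNgt lt_nm.
Qed.

Lemma fq_fqinv k : (0 < k)%N -> fq k * fqinv k = 1.
Proof.
move=> k_gt0; rewrite /fq /fqinv -iprodM; [|exact: admissible_fq|exact: admissible_fqinv].
rewrite -[RHS]iprod1; apply: funext => n; rewrite /iprod /prodq; congr (_ n).
apply: eq_big_nat => j /andP [j_gt0 _].
by apply: mul_1Bqpow_geometric; rewrite muln_gt0 k_gt0.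
Qed.

Lemma fq_lreg k : GRing.lreg (fq k).
Proof. exact/lreg_series/iprod0E. Qed.

Lemma fqX k e : (0 < k)%N -> iprod (fun j => (1 - qpow (k * j)) ^+ e) = fq k ^+ e.
Proof.
move=> k_gt0; elim: e => [|e IH]; first by rewrite expr0 -iprod1; apply: eq_iprod.
rewrite exprS -IH -iprodM; [|exact: admissible_fq|exact/admissibleX/admissible_fq].
by apply: eq_iprod => j; rewrite exprS.
Qed.

Lemma dilate_fq m k : (0 < m)%N -> (0 < k)%N -> dilate m (fq k) = fq (m * k).
Proof.
move=> m_gt0 k_gt0; rewrite /fq iprod_morph.
- by apply: eq_iprod => j; rewrite rmorphB rmorph1 /= dilate_qpow // mulnA.
- exact: rmorphism_monoidP.
- exact: dilate_qcontinuous.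
- exact: admissible_fq.
Qed.

Lemma twist_iprod c : admissible c -> twist (iprod c) = iprod (fun k => twist (c k)).
Proof.
by move=> c1; apply: iprod_morph c1; [apply: rmorphism_monoidP | apply: twist_qcontinuous].
Qed.

Lemma twist_fq_even k : (0 < k)%N -> ~~ odd k -> twist (fq k) = fq k.
Proof.
move=> k_gt0 even_k; rewrite twist_iprod; last exact: admissible_fq.
by apply: eq_iprod => j; rewrite rmorphB rmorph1 /= twist_qpow oddM (negbTE even_k).
Qed.

Lemma twist_fqinv_even k : (0 < k)%N -> ~~ odd k -> twist (fqinv k) = fqinv k.
Proof.
move=> k_gt0 even_k; apply: (@fq_lreg k).
by rewrite -{1}twist_fq_even // -rmorphM fq_fqinv // rmorph1.
Qed.

Lemma fq_spreadX m k e : (0 < m)%N -> (0 < k)%N ->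
  iprod (fun j => if (m %| j)%N then (1 - qpow (k * j)) ^+ e else 1) = fq (m * k) ^+ e.
Proof.
move=> m_gt0 k_gt0; rewrite -fqX ?muln_gt0 ?m_gt0 //.
rewrite -(@iprod_spread m (fun i => (1 - qpow (m * k * i)) ^+ e)) //.
  apply: eq_iprod => j; case: ifP => // /divnK def_j.
  by congr ((1 - qpow _) ^+ _); rewrite -{1}def_j; ring.
move=> i; rewrite -[X in eqmodq _ _ X](expr1n _ e).
by apply/eqmodqX/eqmodq_1Bqpow; rewrite mulnAC leq_pmulr.
Qed.

Lemma fq_sieve m k : (0 < m)%N -> (0 < k)%N ->
  fq k = fq (m * k) * iprod (fun j => if (m %| j)%N then 1 else 1 - qpow (k * j)).
Proof.
move=> m_gt0 k_gt0; rewrite {1}/fq (iprod_split (fun j => m %| j)%N (admissible_fq k_gt0)).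
by rewrite -[fq (m * k)]expr1 -fq_spreadX //; congr (_ * _); apply: eq_iprod => j; case: ifP.
Qed.

(* [twist (fq k) * fq k] (with [m = 2]) and [norm3 (fq k)] (with [m = 3]) have this shape. *)
Lemma fq_sieveX m k e (c : nat -> series) : (0 < m)%N -> (0 < k)%N ->
  (forall j, c j = if (m %| j)%N then (1 - qpow (k * j)) ^+ e else 1 - qpow (m * k * j)) ->
  iprod c * fq (m * (m * k)) = fq (m * k) ^+ e.+1.
Proof.
move=> m_gt0 k_gt0 def_c; have mk_gt0 : (0 < m * k)%N by rewrite muln_gt0 m_gt0.
set A := fun j => if (m %| j)%N then (1 - qpow (k * j)) ^+ e else 1.
set B := fun j => if (m %| j)%N then 1 else 1 - qpow (m * k * j).
have adm_A : admissible A.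
  by move=> j; rewrite /A; case: ifP => // _; exact: admissibleX e (admissible_fq k_gt0) j.
have adm_B : admissible B by move=> j; rewrite /B; case: ifP => // _; apply: admissible_fq.
have -> : iprod c = iprod A * iprod B.
  rewrite -iprodM //; apply: eq_iprod => j.
  by rewrite def_c /A /B; case: ifP; rewrite ?mulr1 ?mul1r.
by rewrite -mulrA [iprod B * _]mulrC /B -fq_sieve // /A fq_spreadX // -exprSr.
Qed.

Lemma twist_fq_odd k : odd k -> twist (fq k) * fq k * fq (2 * (2 * k)) = fq (2 * k) ^+ 3.
Proof.
move=> odd_k; have k_gt0 : (0 < k)%N by case: k odd_k.
have adm := admissible_fq k_gt0.
rewrite twist_iprod // [fq k]/fq -iprodM //; last first.
  by apply: admissible_morph adm; [apply: rmorph1 | apply: twist_qcontinuous].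
apply: fq_sieveX => // j; rewrite rmorphB rmorph1 /= twist_qpow oddM odd_k dvdn2.
case: (odd j); last by rewrite expr2.
by rewrite opprK -mulnA mul2n -addnn -qpowD; ring.
Qed.

Lemma norm3_1Bqpow m :
  norm3 (1 - qpow m) = if (3 %| m)%N then (1 - qpow m) ^+ 3 else 1 - qpow (3 * m).
Proof.
rewrite /norm3 !raddfB /= !part3_1 !part3_qpow /dvdn mulnC -qpowX.
have : (m %% 3 < 3)%N by rewrite ltn_mod.
by case: (m %% 3)%N => [|[|[|r]]] //= _; ring.
Qed.

Lemma norm3_fq k : (0 < k)%N -> coprime 3 k ->
  norm3 (fq k) * fq (3 * (3 * k)) = fq (3 * k) ^+ 4.
Proof.
move=> k_gt0 co3k; rewrite {1}/fq iprod_morph; last exact: admissible_fq.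
- apply: fq_sieveX => // j.
  by rewrite norm3_1Bqpow Gauss_dvdr // mulnA [(3 * k)%N]mulnC.
- exact: norm3_is_monoid_morphism.
- exact: norm3_qcontinuous.
Qed.

(** * Gaussian binomial coefficients *)

Lemma binS2 k : 'C(k.+1, 2) = ('C(k, 2) + k)%N.
Proof. by rewrite binS bin1. Qed.

Section GaussianBinomial.

Variable R : comPzRingType.
Implicit Types p w : R.

Fixpoint qbinom p (n m : nat) {struct n} : R :=
  match n, m with
  | 0, 0 => 1
  | 0, _.+1 => 0
  | _.+1, 0 => 1
  | n'.+1, m'.+1 => qbinom p n' m'.+1 + p ^+ (n' - m') * qbinom p n' m'
  end.

Lemma qbinom_n0 p n : qbinom p n 0 = 1. Proof. by case: n. Qed.

Lemma qbinomSS p n m : qbinom p n.+1 m.+1 = qbinom p n m.+1 + p ^+ (n - m) * qbinom p n m.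
Proof. by []. Qed.

Lemma qbinom_small p n m : (n < m)%N -> qbinom p n m = 0.
Proof. by elim: n m => [|n IH] [|m] //= lt_nm; rewrite !IH ?mulr0 ?addr0 //; lia. Qed.

Theorem qbinom_theorem p w n : \prod_(0 <= i < n) (w + p ^+ i) =
  \sum_(0 <= m < n.+1) qbinom p n m * p ^+ 'C(m, 2) * w ^+ (n - m).
Proof.
elim: n => [|n IH]; first by rewrite big_geq // big_nat1 qbinom_n0 bin0n subnn !expr0 !mulr1.
pose t m := qbinom p n m * p ^+ 'C(m, 2) * w ^+ (n - m).
have Pascal k : (0 <= k < n.+1)%N ->
    (qbinom p n k.+1 + p ^+ (n - k) * qbinom p n k) * p ^+ 'C(k.+1, 2) * w ^+ (n.+1 - k.+1)
    = qbinom p n k.+1 * p ^+ 'C(k.+1, 2) * w ^+ (n - k) + t k * p ^+ n.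
  move=> /andP [_ lt_kn]; rewrite subSS /t mulrDl mulrDl; congr (_ + _).
  have e : (n - k + 'C(k.+1, 2) = 'C(k, 2) + n)%N by rewrite binS2; lia.
  transitivity (qbinom p n k * w ^+ (n - k) * p ^+ (n - k + 'C(k.+1, 2))).
    by rewrite exprD; ring.
  by rewrite e exprD; ring.
rewrite big_nat_recr //= IH mulrDr [RHS]big_nat_recl // bin0n expr0 !mul1r subn0.
rewrite (eq_big_nat _ _ Pascal) big_split /= addrA -mulr_suml; congr (_ + _).
rewrite mulr_suml [LHS]big_nat_recl // /t qbinom_n0 bin0n expr0 !mul1r subn0 -exprSr.
congr (_ + _); rewrite [RHS]big_nat_recr //= qbinom_small // !mul0r addr0.
by apply: eq_big_nat => k /andP [_ lt_kn]; rewrite -mulrA -exprSr; congr (_ * _ ^+ _); lia.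
Qed.

Definition qpoch p k : R := \prod_(1 <= j < k.+1) (1 - p ^+ j).

Lemma qpoch0 p : qpoch p 0 = 1. Proof. by rewrite /qpoch big_geq. Qed.
Lemma qpochS p k : qpoch p k.+1 = qpoch p k * (1 - p ^+ k.+1).
Proof. by rewrite /qpoch big_nat_recr. Qed.

Lemma qbinom_qpoch p n m : (m <= n)%N ->
  qbinom p n m * qpoch p m * qpoch p (n - m) = qpoch p n.
Proof.
elim: n m => [|n IH] [|m] le_mn //; rewrite ?qbinom_n0 ?qpoch0 ?subn0 ?mul1r ?mulr1 //.
rewrite qbinomSS subSS; have [lt_mn | eq_mn] := ltnP m n; last first.
  have -> : m = n by apply/eqP; rewrite eqn_leq -ltnS le_mn eq_mn.
  rewrite qbinom_small // subnn expr0 add0r mul1r qpoch0 mulr1 qpochS mulrA.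
  by have := IH n (leqnn n); rewrite subnn qpoch0 mulr1 => ->.
have def_nm : (n - m = (n - m.+1).+1)%N by lia.
have pnm : p ^+ (n - m) * p ^+ m.+1 = p ^+ n.+1 by rewrite -exprD; congr (_ ^+ _); lia.
transitivity (qbinom p n m.+1 * qpoch p m.+1 * qpoch p (n - m.+1) * (1 - p ^+ (n - m))
    + p ^+ (n - m) * (qbinom p n m * qpoch p m * qpoch p (n - m)) * (1 - p ^+ m.+1)).
  rewrite def_nm !qpochS -def_nm; move: (p ^+ (n - m)) (p ^+ m.+1) => X Y; ring.
by rewrite IH // IH ?(ltnW lt_mn) // qpochS -pnm; ring.
Qed.

End GaussianBinomial.

(** * Theta series of generalized polygonal numbers *)

Lemma qpoch_qpow a k : qpoch (qpow a) k = prodq (fun j => 1 - qpow (a * j)) k.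
Proof. by apply: eq_bigr => j _; rewrite qpowX. Qed.

Lemma qbinom_fq_eqmodq a n m : (0 < a)%N -> (m <= n)%N ->
  eqmodq (minn m (n - m)).+1 (qbinom (qpow a) n m * fq a) 1.
Proof.
move=> a_gt0 le_mn; set K := (minn m (n - m)).+1.
have qpoch_fq k : (K <= k.+1)%N -> eqmodq K (qpoch (qpow a) k) (fq a).
  move=> le_Kk; rewrite qpoch_qpow; apply/eqmodq_sym/(eqmodq_le le_Kk).
  exact: iprod_eqmodq (admissible_fq a_gt0) (leqnn k).
apply: (@eqmodq_lregl (fq a)); first exact: iprod0E.
rewrite mulr1 mulrCA; apply: (@eqmodq_trans _ _ (qpoch (qpow a) n)).
  rewrite -(qbinom_qpoch _ le_mn) -mulrA; apply: eqmodqM; first exact: eqmodq_refl.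
  by apply: eqmodqM; apply/eqmodq_sym/qpoch_fq; rewrite ltnS ?geq_minl ?geq_minr.
by apply: qpoch_fq; rewrite ltnS (leq_trans (geq_minl _ _)).
Qed.

(* [polyg a i] and [polygN a i] are the exponents [a n (n - 1) / 2 + n] at [n = i] and
   [n = -i]; for [a = 3] these are the generalized pentagonal numbers. *)
Definition polyg (a i : nat) : nat := a * 'C(i, 2) + i.
Definition polygN (a i : nat) : nat := a * 'C(i, 2) + (a - 1) * i.

Definition gpolygonal (a n : nat) : Prop :=
  exists i, polyg a i = n \/ (0 < i)%N /\ polygN a i = n.

Definition theta (a : nat) : series := fun n => (`[< gpolygonal a n >] : nat)%:R.

Lemma theta_eq a b n m : (gpolygonal a n <-> gpolygonal b m) -> theta a n = theta b m.
Proof. by move=> /propext eq_nm; rewrite /theta eq_nm. Qed.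

Lemma theta_eq0 a n : ~ gpolygonal a n -> theta a n = 0.
Proof. by move=> not_n; rewrite /theta asboolF. Qed.

Lemma polyg_ge a i : (i <= polyg a i)%N. Proof. exact: leq_addl. Qed.

Lemma polygN_ge a i : (2 <= a)%N -> (i <= polygN a i)%N.
Proof. by move=> a_ge2; rewrite /polygN; nia. Qed.

Lemma binomial2 x : (2 * 'C(x, 2) + x = x * x)%N.
Proof. by elim: x => [|x IH] //; rewrite binS2; nia. Qed.

Lemma polyg_homo a : {homo polyg a : i j / (i < j)%N}.
Proof.
move=> i j lt_ij; rewrite /polyg.
by have := leq_mul (leqnn a) (leq_bin2l 2 (ltnW lt_ij)); lia.
Qed.

Lemma polygN_homo a : (2 <= a)%N -> {homo polygN a : i j / (i < j)%N}.
Proof.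
move=> a_ge2 i j lt_ij; rewrite /polygN.
have := leq_mul (leqnn a) (leq_bin2l 2 (ltnW lt_ij)).
have : ((a - 1) * i < (a - 1) * j)%N by rewrite ltn_mul2l lt_ij andbT; lia.
lia.
Qed.

Lemma polygN_between a j : (3 <= a)%N -> (0 < j)%N ->
  (polyg a j < polygN a j < polyg a j.+1)%N.
Proof. by move=> a_ge3 j_gt0; rewrite /polyg /polygN binS2; apply/andP; split; nia. Qed.

Lemma polyg_neq_polygN a i j : (3 <= a)%N -> (0 < j)%N -> polyg a i != polygN a j.
Proof.
move=> a_ge3 j_gt0; have /andP [lt_j lt_j1] := polygN_between a_ge3 j_gt0.
apply/eqP => eq_ij; have [le_ij | lt_ji] := leqP i j.
  by have := ltnW_homo (@polyg_homo a) le_ij; rewrite eq_ij leqNgt lt_j.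
by have := ltnW_homo (@polyg_homo a) lt_ji; rewrite eq_ij leqNgt lt_j1.
Qed.

Lemma binomial2D x y : 'C(x + y, 2) = ('C(x, 2) + 'C(y, 2) + x * y)%N.
Proof. by have := binomial2 (x + y); have := binomial2 x; have := binomial2 y; nia. Qed.

(* The index [m] of the q-binomial expansion of [theta_part a N] below corresponds to
   [n = m - N] in the theta series. *)
Definition theta_exp (a N m : nat) : nat :=
  if (N <= m)%N then polyg a (m - N) else polygN a (N - m).

Lemma theta_exp_inj a N : (3 <= a)%N -> injective (theta_exp a N).
Proof.
move=> a_ge3 m1 m2; rewrite /theta_exp.
have polyg_inj := incn_inj (leq_mono (@polyg_homo a)).
have polygN_inj := incn_inj (leq_mono (polygN_homo (ltnW a_ge3))).
case: (leqP N m1) => le1; case: (leqP N m2) => le2.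
- by move/polyg_inj; lia.
- by move/eqP; rewrite (negbTE (polyg_neq_polygN _ a_ge3 _)) //; lia.
- by move/esym/eqP; rewrite (negbTE (polyg_neq_polygN _ a_ge3 _)) //; lia.
- by move/polygN_inj; lia.
Qed.

Lemma theta_exp_shift a N m : (0 < a)%N -> (0 < N)%N -> (m <= 2 * N)%N ->
  (a * 'C(m, 2) + (a * N - 1) * (2 * N - m)
    = a * 'C(N, 2) + N * (a * N - 1) + theta_exp a N m)%N.
Proof.
move=> a_gt0 N_gt0 le_m2N; rewrite /theta_exp /polyg /polygN.
have aN_gt0 : (0 < a * N)%N by rewrite muln_gt0 a_gt0.
set M := (a * N - 1)%N; have def_M : (M + 1 = a * N)%N by rewrite /M; lia.
case: leqP => [le_Nm | lt_mN].
  set i := (m - N)%N; set k := (2 * N - m)%N.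
  have -> : m = (N + i)%N by rewrite /i; lia.
  have def_N : N = (i + k)%N by rewrite /i /k; lia.
  by rewrite binomial2D; clearbody i k M; subst N; nia.
set i := (N - m)%N; have def_N : N = (m + i)%N by rewrite /i; lia.
have -> : (2 * N - m = N + i)%N by rewrite /i; lia.
rewrite [in RHS]def_N binomial2D; have := binomial2 i.
have : (a - 1 + 1 = a)%N by lia.
by clearbody i M; subst N; nia.
Qed.

Definition theta_part (a N : nat) : series :=
  \prod_(0 <= i < N) ((1 + qpow (a * i + 1)) * (1 + qpow (a * i + (a - 1)))).

Lemma prod_qpow_lin N a : \prod_(0 <= i < N) qpow (a * i) = qpow (a * 'C(N, 2)).
Proof.
elim: N => [|N IH]; first by rewrite big_geq // bin0n muln0 qpow0.
by rewrite big_nat_recr //= IH qpowD binS2 mulnDr.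
Qed.

Lemma theta_part_shift a N : (0 < a)%N ->
  \prod_(0 <= i < 2 * N) (qpow (a * N - 1) + qpow a ^+ i) =
  qpow (a * 'C(N, 2) + N * (a * N - 1)) * theta_part a N.
Proof.
move=> a_gt0; set d := (a * N - 1)%N.
rewrite (@big_cat_nat _ _ _ N) //=; last by lia.
have low : \prod_(0 <= i < N) (qpow d + qpow a ^+ i) =
    qpow (a * 'C(N, 2)) * \prod_(0 <= i < N) (1 + qpow (a * i + (a - 1))).
  rewrite (@eq_big_nat _ _ _ 0 N _
    (fun i => qpow (a * i) * (1 + qpow (a * (N - i.+1) + (a - 1))))); last first.
    move=> i /andP [_ lt_iN]; rewrite mulrDr mulr1 qpowD qpowX addrC.
    by congr (_ + qpow _); rewrite /d; nia.
  by rewrite big_split /= prod_qpow_lin [in RHS](big_nat_rev _ _ 0 N).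
have high : \prod_(N <= i < 2 * N) (qpow d + qpow a ^+ i) =
    qpow (N * d) * \prod_(0 <= i < N) (1 + qpow (a * i + 1)).
  rewrite -{1}(add0n N) big_addn (_ : 2 * N - N = N)%N; last by lia.
  rewrite (@eq_big_nat _ _ _ 0 N _ (fun i => qpow d * (1 + qpow (a * i + 1)))); last first.
    move=> i /andP [_ lt_iN]; rewrite mulrDr mulr1 qpowD qpowX.
    by congr (_ + qpow _); rewrite /d; nia.
  by rewrite big_split /= prodr_const_nat subn0 qpowX mulnC.
by rewrite low high /theta_part big_split /= -qpowD; ring.
Qed.

Lemma theta_part_expand a N : (0 < a)%N -> (0 < N)%N ->
  theta_part a N = \sum_(0 <= m < (2 * N).+1) qbinom (qpow a) (2 * N) m * qpow (theta_exp a N m).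
Proof.
move=> a_gt0 N_gt0; apply: (@qpow_lreg (a * 'C(N, 2) + N * (a * N - 1))).
rewrite -theta_part_shift // qbinom_theorem mulr_sumr.
apply: eq_big_nat => m /andP [_ lt_m].
by rewrite !qpowX -mulrA qpowD mulrCA qpowD theta_exp_shift.
Qed.

Lemma theta_part_eqmodq a N n : (2 <= a)%N -> (0 < N)%N -> (n <= N)%N ->
  eqmodq n.+1 (theta_part a N * fq a) (\sum_(0 <= m < (2 * N).+1) qpow (theta_exp a N m)).
Proof.
move=> a_ge2 N_gt0 le_nN; have a_gt0 : (0 < a)%N by apply: leq_trans a_ge2.
rewrite theta_part_expand // mulr_suml.
apply: eqmodq_sum_nat => m /andP [_ lt_m]; rewrite mulrAC mulrC -[X in eqmodq _ _ X]mulr1.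
have le_m : (m <= 2 * N)%N by rewrite -ltnS.
apply: eqmodq_le (@eqmodq_qpowM (theta_exp a N m) _ _ _ (qbinom_fq_eqmodq a_gt0 le_m)).
have : ((if (N <= m)%N then m - N else N - m) <= theta_exp a N m)%N.
  by rewrite /theta_exp; case: ifP => _; [apply: polyg_ge | apply: polygN_ge].
by case: ifP => le_Nm; lia.
Qed.

Lemma sum_qpow_inj (f : nat -> nat) K n : injective f ->
  (\sum_(0 <= m < K) qpow (f m)) n = [exists m : 'I_K, f m == n]%:R.
Proof.
move=> f_inj; rewrite ssumE big_mkord; case: existsP => [[m0 /eqP f_m0] | no_m].
  rewrite (bigD1 m0) //= qpowE f_m0 eqxx big1 ?addr0 // => m neq_m.
  rewrite qpowE; case: eqP => // f_m; case/eqP: neq_m; apply: val_inj.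
  by apply: f_inj; rewrite f_m0 f_m.
by rewrite big1 // => m _; rewrite qpowE; case: eqP => // f_m; case: no_m; exists m; rewrite f_m.
Qed.

Lemma theta_exp_gpolygonal a N n : (2 <= a)%N -> (n <= N)%N ->
  [exists m : 'I_(2 * N).+1, theta_exp a N m == n] = `[< gpolygonal a n >].
Proof.
move=> a_ge2 le_nN; apply/existsP/asboolP => [[m /eqP] | [i [eq_n | [i_gt0 eq_n]]]].
  rewrite /theta_exp; case: leqP => [_ | lt_mN] <-; first by exists (m - N)%N; left.
  by exists (N - m)%N; right; rewrite subn_gt0.
- have lt_i : (N + i < (2 * N).+1)%N by have := polyg_ge a i; lia.
  by exists (Ordinal lt_i); rewrite /theta_exp /= leq_addr addKn eq_n.
- have lt_i : (N - i < (2 * N).+1)%N by lia.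
  have le_iN : (i <= N)%N by have := polygN_ge i a_ge2; lia.
  have lt_NiN : (N <= N - i)%N = false by lia.
  by exists (Ordinal lt_i); rewrite /theta_exp /= lt_NiN subKn // eq_n.
Qed.

Lemma theta_part_coef a N n : (3 <= a)%N -> (0 < N)%N -> (n <= N)%N ->
  (theta_part a N * fq a) n = theta a n.
Proof.
move=> a_ge3 N_gt0 le_nN; have a_ge2 := ltnW a_ge3.
rewrite (theta_part_eqmodq a_ge2 N_gt0 le_nN (ltnSn n)) sum_qpow_inj.
  by rewrite theta_exp_gpolygonal.
exact: theta_exp_inj.
Qed.

(* Jacobi's triple product identity. *)
Lemma iprod_theta a c : (3 <= a)%N -> admissible c ->
  (forall N, theta_part a N = prodq c (a * N)) -> iprod c * fq a = theta a.
Proof.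
move=> a_ge3 c1 def_c; apply: funext => n; have le_n : (n <= a * n.+1)%N by nia.
rewrite (eqmodqM (iprod_eqmodq c1 le_n) (@eqmodq_refl _ (fq a)) (ltnSn n)).
by rewrite -def_c theta_part_coef.
Qed.

Definition plusq (m j : nat) : series := if (m %| j)%N then 1 else 1 + qpow j.

Lemma admissible_plusq m : admissible (plusq m).
Proof.
move=> j i lt_ij; rewrite /plusq; case: ifP => // _.
by rewrite saddE qpowE (ltn_eqF lt_ij) addr0.
Qed.

Lemma theta_part4 N : theta_part 4 N = prodq (plusq 2) (4 * N).
Proof.
elim: N => [|N IH]; first by rewrite /theta_part big_geq // muln0 prodq0.
rewrite /theta_part big_nat_recr //= -/(theta_part 4 N) IH.
have -> : (4 * N.+1 = (4 * N).+4)%N by lia.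
rewrite !prodqS /plusq !dvdn2 /= oddM /= !mulr1 -!mulrA.
by congr (_ * (_ * _)); congr (1 + qpow _); lia.
Qed.

Lemma theta_part3 N : theta_part 3 N = prodq (plusq 3) (3 * N).
Proof.
elim: N => [|N IH]; first by rewrite /theta_part big_geq // muln0 prodq0.
rewrite /theta_part big_nat_recr //= -/(theta_part 3 N) IH.
have -> : (3 * N.+1 = (3 * N).+3)%N by lia.
have ndvd1 : (3 %| (3 * N).+1)%N = false by apply/negP => /dvdnP [t]; lia.
have ndvd2 : (3 %| (3 * N).+2)%N = false by apply/negP => /dvdnP [t]; lia.
have dvd3 : (3 %| (3 * N).+3)%N by apply/dvdnP; exists N.+1; lia.
rewrite !prodqS /plusq ndvd1 ndvd2 dvd3 !mulr1 -!mulrA.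
by congr (_ * (_ * _)); congr (1 + qpow _); lia.
Qed.

Lemma iprod_plusq m : (0 < m)%N -> iprod (plusq m) * fq 1 * fq (m * 2) = fq m * fq 2.
Proof.
move=> m_gt0; rewrite (fq_sieve m_gt0 (ltn0Sn 0)) (fq_sieve m_gt0 (ltn0Sn 1)) !muln1.
set S := iprod (fun j => if (m %| j)%N then 1 else 1 - qpow (1 * j)).
set U := iprod (fun j => if (m %| j)%N then 1 else 1 - qpow (2 * j)).
have plusq_S : iprod (plusq m) * S = U.
  rewrite /S -iprodM; [|exact: admissible_plusq|].
    apply: eq_iprod => j; rewrite /plusq; case: ifP => _; rewrite ?mul1r //.
    by rewrite mul1n mul2n -addnn -qpowD; ring.
  by move=> j; rewrite /=; case: ifP => // _; apply: admissible_fq.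
by rewrite -plusq_S; ring.
Qed.

Lemma theta4_fq : theta 4 * fq 1 = fq 2 ^+ 2.
Proof. by rewrite -(iprod_theta _ (@admissible_plusq 2) theta_part4) // mulrAC iprod_plusq. Qed.

Lemma theta3_fq : theta 3 * fq 1 * fq 6 = fq 2 * fq 3 ^+ 2.
Proof.
rewrite -(iprod_theta _ (@admissible_plusq 3) theta_part3) //.
transitivity (iprod (plusq 3) * fq 1 * fq (3 * 2) * fq 3); first ring.
by rewrite iprod_plusq //; ring.
Qed.

Lemma polyg4_polyg3 t : [/\ polyg 4 (3 * t) = 3 * polyg 3 (2 * t),
  polygN 4 (3 * t) = 3 * polygN 3 (2 * t),
  polygN 4 (3 * t + 1) = 3 * polyg 3 (2 * t + 1) &
  polyg 4 (3 * t + 2) = 3 * polygN 3 (2 * t + 1)]%N.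
Proof.
rewrite /polyg /polygN; have := binomial2 (3 * t); have := binomial2 (3 * t + 1).
have := binomial2 (3 * t + 2); have := binomial2 (2 * t); have := binomial2 (2 * t + 1).
by move=> *; split; nia.
Qed.

Lemma polyg4_mod3 t :
  (polyg 4 (3 * t + 1) %% 3 = 1 /\ polygN 4 (3 * t + 2) %% 3 = 1)%N.
Proof.
rewrite /polyg /polygN; have := binomial2 (3 * t + 1); have := binomial2 (3 * t + 2).
move=> *; split.
  have -> : (4 * 'C(3 * t + 1, 2) + (3 * t + 1) = (6 * t * t + 3 * t) * 3 + 1)%N by nia.
  by rewrite modnMDl.
have -> : (4 * 'C(3 * t + 2, 2) + (4 - 1) * (3 * t + 2) = (6 * t * t + 9 * t + 3) * 3 + 1)%N.
  by nia.
by rewrite modnMDl.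
Qed.

Lemma split_mod3 i : exists t, [\/ i = 3 * t, i = 3 * t + 1 | i = 3 * t + 2]%N.
Proof.
exists (i %/ 3)%N; have := divn_eq i 3; have : (i %% 3 < 3)%N by rewrite ltn_mod.
by case: (i %% 3)%N => [|[|[|r]]] // _ def_i; [constructor 1 | constructor 2 | constructor 3]; lia.
Qed.

Lemma gpolygonal4_mod3 n : gpolygonal 4 n -> (n %% 3 != 2)%N.
Proof.
case=> i eq_n; have [t [] def_i] := split_mod3 i; subst i;
  have [e1 e2 e3 e4] := polyg4_polyg3 t; have [e5 e6] := polyg4_mod3 t;
  by case: eq_n => [|[_]] <-; rewrite ?e1 ?e2 ?e3 ?e4 ?e5 ?e6 ?modnMr.
Qed.

Lemma gpolygonal4_3 k : gpolygonal 4 (3 * k) <-> gpolygonal 3 k.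
Proof.
split.
  case=> i eq_k; have [t [] def_i] := split_mod3 i; subst i;
    have [e1 e2 e3 e4] := polyg4_polyg3 t; have [e5 e6] := polyg4_mod3 t.
  - by exists (2 * t)%N; case: eq_k => [|[i_gt0]]; rewrite ?e1 ?e2 => eq_k; [left | right]; lia.
  - case: eq_k => [eq_k | [_ eq_k]]; first by move: e5; rewrite eq_k modnMr.
    by exists (2 * t + 1)%N; left; move: eq_k; rewrite e3; lia.
  - case: eq_k => [eq_k | [_ eq_k]]; last by move: e6; rewrite eq_k modnMr.
    by exists (2 * t + 1)%N; right; move: eq_k; rewrite e4; lia.
case=> i eq_k; have [t def_i] : exists t, i = (2 * t + odd i)%N.
  by exists i./2; rewrite -{1}(odd_double_half i) addnC mul2n.
have [e1 e2 e3 e4] := polyg4_polyg3 t.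
move: eq_k; rewrite def_i; case: (odd i) => /= [[eq_k | [_ eq_k]] | [eq_k | [i_gt0 eq_k]]].
- by exists (3 * t + 1)%N; right; rewrite e3 eq_k; lia.
- by exists (3 * t + 2)%N; left; rewrite e4 eq_k.
- by exists (3 * t)%N; left; rewrite e1 addn0 in eq_k *; rewrite eq_k.
- by exists (3 * t)%N; right; rewrite e2 addn0 in eq_k *; rewrite eq_k; lia.
Qed.

Lemma part3_theta4 : part3 0 (theta 4) = dilate 3 (theta 3) /\ part3 2 (theta 4) = 0.
Proof.
split; apply: funext => n; rewrite /part3 /dilate /dvdn; case: eqP => // n_mod.
  have /divnK def_n : (3 %| n)%N by rewrite /dvdn n_mod.
  by rewrite -[in LHS]def_n mulnC; apply/theta_eq/gpolygonal4_3.
by apply: theta_eq0 => /gpolygonal4_mod3; rewrite n_mod.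
Qed.

Definition Pgf : series := fq 2 * fq 6 ^+ 3 * (fqinv 1 * fqinv 3 * fqinv 4 * fqinv 12).

Lemma P_Pgf : P = Pgf.
Proof.
apply: funext => n; rewrite /P /gen_part !f_part_prodq // !finv_part_prodq !smul_mulr.
have fq_n k : (0 < k)%N -> eqmodq n.+1 (prodq (fun j => 1 - qpow (k * j)) n) (fq k).
  by move=> k_gt0; apply/eqmodq_sym/(iprod_eqmodq (admissible_fq k_gt0)).
have fqinv_n k : (0 < k)%N ->
    eqmodq n.+1 (prodq (fun j => inv_one_minus_qk (k * j)) n) (fqinv k).
  by move=> k_gt0; apply/eqmodq_sym/(iprod_eqmodq (admissible_fqinv k_gt0)).
rewrite (_ : Pgf = fq 2 * (fq 6 * (fq 6 * (fq 6
    * (fqinv 1 * (fqinv 3 * (fqinv 4 * fqinv 12))))))); last by rewrite /Pgf; ring.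
apply: (fun e : eqmodq n.+1 _ _ => e n (ltnSn n)).
by do 7 (apply: eqmodqM; first by [apply: fq_n | apply: fqinv_n]); apply: fqinv_n.
Qed.

Lemma twist_fqinv k : (0 < k)%N -> twist (fqinv k) * twist (fq k) = 1.
Proof. by move=> k_gt0; rewrite -rmorphM mulrC fq_fqinv // rmorph1. Qed.

Lemma twist_Pgf : twist Pgf * fq 2 ^+ 2 = fq 1 * fq 3.
Proof.
have t1 : twist (fq 1) * fq 1 * fq 4 = fq 2 ^+ 3 := twist_fq_odd (k := 1) isT.
have t3 : twist (fq 3) * fq 3 * fq 12 = fq 6 ^+ 3 := twist_fq_odd (k := 3) isT.
have -> : twist Pgf
    = fq 2 * fq 6 ^+ 3 * (twist (fqinv 1) * twist (fqinv 3) * fqinv 4 * fqinv 12).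
  rewrite /Pgf !(rmorphM, rmorphXn) /= !twist_fq_even //.
  by rewrite (@twist_fqinv_even 4) // (@twist_fqinv_even 12).
apply: (lregM (@fq_lreg 2) (lregX (n := 3) (@fq_lreg 6))).
transitivity (fq 2 * fq 6 ^+ 3 * (twist (fqinv 1) * twist (fqinv 3) * fqinv 4 * fqinv 12)
  * (twist (fq 1) * fq 1 * fq 4) * (twist (fq 3) * fq 3 * fq 12)); first by rewrite t1 t3; ring.
transitivity (fq 2 * fq 6 ^+ 3 * (twist (fqinv 1) * twist (fq 1)) * (twist (fqinv 3) * twist (fq 3))
  * (fq 4 * fqinv 4) * (fq 12 * fqinv 12) * (fq 1 * fq 3)); first ring.
by rewrite !twist_fqinv // !fq_fqinv //; ring.
Qed.

Lemma twist_Pgf_theta4 : twist Pgf * theta 4 = fq 3.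
Proof.
by apply: (@fq_lreg 1); rewrite mulrCA (mulrC (fq 1)) theta4_fq twist_Pgf.
Qed.

Lemma norm3_theta4 : norm3 (theta 4) * fq 3 ^+ 4 * fq 18 ^+ 2 = fq 6 ^+ 8 * fq 9.
Proof.
have n1 : norm3 (fq 1) * fq 9 = fq 3 ^+ 4 := norm3_fq (k := 1) isT isT.
have n2 : norm3 (fq 2) * fq 18 = fq 6 ^+ 4 := norm3_fq (k := 2) isT isT.
have [_ norm3M] := norm3_is_monoid_morphism.
have n_theta : norm3 (theta 4) * norm3 (fq 1) = norm3 (fq 2) ^+ 2.
  by rewrite -norm3M theta4_fq norm3X.
by rewrite -n1 mulrA n_theta -[8%N]/(4 * 2)%N exprM -n2; ring.
Qed.

Lemma part3_twist_Pgf : part3 0 (twist Pgf) = dilate 3 (twist Pgf) ^+ 3.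
Proof.
set G := twist Pgf; have [theta4_0 theta4_2] := part3_theta4.
have supp_f3 : supp3 0 (fq 3) by rewrite -(@dilate_fq 3 1) //; apply: supp3_dilate3.
have := part3_quotient theta4_2 supp_f3 twist_Pgf_theta4; rewrite theta4_0 -/G => quot.
have dil_theta3 : dilate 3 (theta 3) * fq 3 * fq 18 = fq 6 * fq 9 ^+ 2.
  by have := congr1 (dilate 3) theta3_fq; rewrite !(rmorphM, rmorphXn) /= !dilate_fq //.
have dil_G : dilate 3 G * fq 6 ^+ 2 = fq 3 * fq 9.
  by have := congr1 (dilate 3) twist_Pgf; rewrite -/G !(rmorphM, rmorphXn) /= !dilate_fq //.
apply: (lregM (lregX (n := 8) (@fq_lreg 6)) (@fq_lreg 9)); rewrite -[in LHS]norm3_theta4.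
transitivity (fq 3 ^+ 3 * (dilate 3 (theta 3) * fq 3 * fq 18) ^+ 2).
  transitivity (part3 0 G * norm3 (theta 4) * fq 3 ^+ 4 * fq 18 ^+ 2); first ring.
  by rewrite quot; ring.
transitivity ((dilate 3 G * fq 6 ^+ 2) ^+ 3 * fq 6 ^+ 2 * fq 9); last ring.
by rewrite dil_theta3 dil_G; ring.
Qed.

Theorem theorem4p4 : convolutive 3 P.
Proof.
move=> n; rewrite spowE P_Pgf -[Pgf]twistK -rmorphXn.
have := congr1 (fun x : series => x (3 * n)%N) part3_twist_Pgf.
rewrite /= -rmorphXn /= dilate_mulnE // /part3 mulnC modnMl /= => G3n.
by rewrite {1}/twist G3n -signr_odd oddM andbT signr_odd.
Qed.
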